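(* Let $p$ be a prime. Suppose that every finite metabelian semi-$p$-abelian $p$-group is semi-$p^{2}$-abelian. Then every finite metabelian semi-$p$-abelian $p$-group is strongly semi-$p$-abelian.
   Context: Let $G$ be a finite $p$-group. For a positive integer $i$, $G$ is called semi-$p^{i}$-abelian if for all $a,b\in G$: $(ab)^{p^{i}}=1$ if and only if $a^{p^{i}}b^{p^{i}}=1$. $G$ is strongly semi-$p$-abelian if it is semi-$p^{i}$-abelian for every positive integer $i$. Metabelian means $G''=1$. *)

From mathcomp Require Import all_boot all_fingroup all_solvable pgroup commutator.
Set Implicit Arguments. Unset Strict Implicit. Unset Printing Implicit Defensive.
Local Open Scope group_scope.

Definition semi_pi_abelian (gT : finGroupType) (p i : nat) (G : {set gT}) : Prop :=
  forall a b, a \in G -> b \in G ->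
    ((a * b) ^+ (p ^ i) == 1) = (a ^+ (p ^ i) * b ^+ (p ^ i) == 1).

Definition strongly_semi_p_abelian (gT : finGroupType) (p : nat) (G : {set gT}) : Prop :=
  forall i, 0 < i -> semi_pi_abelian p i G.

Definition metabelian (gT : finGroupType) (G : {set gT}) : bool :=
  G^`(2) == 1.

From mathcomp Require Import all_boot all_fingroup all_solvable pgroup commutator.
Set Implicit Arguments. Unset Strict Implicit. Unset Printing Implicit Defensive.
Local Open Scope group_scope.

(** Induct on the exponent via the quotient by [K = {x in G | x^p = 1}], a
  normal subgroup when [G] is semi-p-abelian.  A coset [xK] has order dividing
  [p^j] iff [x] has order dividing [p^(j+1)], so semi-p-abelianity of [G]
  transfers semi-p^j-abelianity of [G/K] to semi-p^(j+1)-abelianity of [G],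
  while [G/K] is itself semi-p-abelian because [G] is semi-p^2-abelian. *)

Lemma morphim_metabelian (aT rT : finGroupType) (D : {group aT})
    (f : {morphism D >-> rT}) (G : {group aT}) :
  G \subset D -> metabelian G -> metabelian (f @* G).
Proof. by move=> sGD /eqP G''1; rewrite /metabelian -morphim_der // G''1 morphim1. Qed.

Section ExponentKernel.

Variables (gT : finGroupType) (G : {group gT}) (m : nat).

Definition exp_ker := [set x in G | x ^+ m == 1].

Hypothesis expm_closed :
  {in G &, forall a b, a ^+ m = 1 -> b ^+ m = 1 -> (a * b) ^+ m = 1}.

Lemma group_set_exp_ker : group_set exp_ker.
Proof.
apply/group_setP; split=> [|x y]; first by rewrite inE group1 expg1n eqxx.
rewrite !inE => /andP[Gx /eqP x1] /andP[Gy /eqP y1].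
by rewrite groupM // expm_closed // eqxx.
Qed.

Canonical exp_ker_group := Group group_set_exp_ker.

Lemma exp_ker_norm : G \subset 'N(exp_ker).
Proof.
apply/subsetP => y Gy; rewrite inE; apply/subsetP => _ /imsetP[z + ->].
by rewrite !inE => /andP[Gz /eqP z1]; rewrite groupJ // -conjXg z1 conj1g eqxx.
Qed.

Lemma coset_exp_ker_eq1 x : x \in G -> (coset exp_ker x == 1) = (x ^+ m == 1).
Proof.
move=> Gx; apply/eqP/eqP => [/coset_idr | x1].
  by rewrite (subsetP exp_ker_norm) // inE => /(_ isT) /andP[_ /eqP].
by apply: coset_id; rewrite inE Gx x1 eqxx.
Qed.

End ExponentKernel.

Section SemiAbelianQuotient.

Variables (p i : nat) (gT : finGroupType) (G : {group gT}).
Hypothesis semiG : semi_pi_abelian p i G.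

Lemma semi_pi_abelian_expm_closed :
  {in G &, forall a b, a ^+ (p ^ i) = 1 -> b ^+ (p ^ i) = 1 ->
     (a * b) ^+ (p ^ i) = 1}.
Proof. by move=> a b Ga Gb a1 b1; apply/eqP; rewrite semiG // a1 b1 mulg1. Qed.

Let closedG := semi_pi_abelian_expm_closed.

Let K := exp_ker_group closedG.

Let nKG : G \subset 'N(K) := exp_ker_norm G (p ^ i).

Lemma coset_exp_ker_expn_eq1 j x :
  x \in G -> (coset K x ^+ (p ^ j) == 1) = (x ^+ (p ^ (i + j)) == 1).
Proof.
move=> Gx; rewrite -morphX ?(subsetP nKG) // (coset_exp_ker_eq1 closedG) ?groupX //.
by rewrite -expgM -expnD addnC.
Qed.

Lemma semi_pi_abelian_quotient j :
  semi_pi_abelian p (i + j) G -> semi_pi_abelian p j (G / K).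
Proof.
move=> semiGij _ _ /morphimP[a Na Ga ->] /morphimP[b Nb Gb ->].
rewrite -morphM // coset_exp_ker_expn_eq1 ?groupM // semiGij //.
rewrite -!morphX // -morphM ?groupX // (coset_exp_ker_eq1 closedG) ?groupM ?groupX //.
by rewrite semiG ?groupX // -!expgM -!expnD addnC.
Qed.

Lemma semi_pi_abelian_from_quotient j :
  semi_pi_abelian p j (G / K) -> semi_pi_abelian p (i + j) G.
Proof.
move=> semiQ a b Ga Gb.
have [Na Nb] := (subsetP nKG a Ga, subsetP nKG b Gb).
rewrite -coset_exp_ker_expn_eq1 ?groupM // morphM // semiQ ?mem_quotient //.
rewrite -!morphX // -morphM ?groupX // (coset_exp_ker_eq1 closedG) ?groupM ?groupX //.
by rewrite semiG ?groupX // -!expgM -!expnD addnC.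
Qed.

End SemiAbelianQuotient.

Lemma semi_pS_abelian_of_semi_p2_abelian (p : nat)
  (semi_p_semi_p2 : forall (gT : finGroupType) (G : {group gT}),
     p.-group G -> metabelian G -> semi_pi_abelian p 1 G -> semi_pi_abelian p 2 G)
  i (gT : finGroupType) (G : {group gT}) :
  p.-group G -> metabelian G -> semi_pi_abelian p 1 G -> semi_pi_abelian p i.+1 G.
Proof.
elim: i gT G => [//|i IHi] gT G pG mG semi1.
have semi2 := semi_p_semi_p2 _ _ pG mG semi1.
apply: (semi_pi_abelian_from_quotient (semiG := semi1) (j := i.+1)).
apply: IHi.
- exact: quotient_pgroup.
- exact: morphim_metabelian (exp_ker_norm _ _) mG.
- exact: semi_pi_abelian_quotient.
Qed.

Theorem lemma2p3 (p : nat) (p_pr : prime p)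
  (Hyp : forall (gT : finGroupType) (G : {group gT}),
     p.-group G -> metabelian G -> semi_pi_abelian p 1 G -> semi_pi_abelian p 2 G)
  (gT : finGroupType) (G : {group gT}) :
  p.-group G -> metabelian G -> semi_pi_abelian p 1 G -> strongly_semi_p_abelian p G.
Proof.
move=> pG mG semi1 [//|i] _.
exact: (semi_pS_abelian_of_semi_p2_abelian Hyp).
Qed.
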